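(* Let $\alpha\in\mathbb{Q}(i)\setminus\mathbb{R}$ with $|\alpha|>1$, with minimal primitive polynomial $P_\alpha(X)=a_2X^2+a_1X+a_0$ ($a_0,a_1,a_2\in\mathbb{Z}$ coprime, $a_2>0$, $P_\alpha(\alpha)=0$), $\mathcal{D}=\{0,\ldots,|a_0|-1\}$ and $\Lambda_\alpha=\mathbb{Z}[\alpha]\cap\alpha^{-1}\mathbb{Z}[\alpha^{-1}]$, and assume $\alpha$ has the finiteness property in $\Lambda_\alpha$. For $k\ge0$ let $L_\alpha^k$ be the set of words $d_{k-1}\ldots d_0\in\mathcal{D}^k$ such that $\sum_{j=l}^{k-1}d_j\alpha^{j-l}\in\Lambda_\alpha$ for every $0\le l\le k-1$ (i.e. integer $\alpha$-expansions of length $k$, leading zeros allowed). Then $$\#L_\alpha^k\le\left\lceil\frac{|\mathcal{D}|}{a_2}\right\rceil^k.$$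
   Context: For $x\in\Lambda_\alpha$ there is a unique $d\in\mathcal{D}$ with $(x-d)/\alpha\in\Lambda_\alpha$, and $T_\alpha(x)=(x-d)/\alpha$; $\alpha$ has the finiteness property in $\Lambda_\alpha$ if for every $N\in\Lambda_\alpha$ the orbit under $T_\alpha$ reaches $0$. *)

From Stdlib Require Import ClassicalEpsilon.
From mathcomp Require Import all_boot all_order all_algebra all_field.
From mathcomp Require Import boolp.
Set Implicit Arguments. Unset Strict Implicit. Unset Printing Implicit Defensive.
Import Order.TTheory GRing.Theory Num.Theory.
Local Open Scope ring_scope.

Definition intpoly_eval (p : {poly int}) (x : algC) : algC :=
  (map_poly (fun z : int => z%:~R) p).[x].

Definition inZpoly (x y : algC) : Prop := exists p : {poly int}, y = intpoly_eval p x.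

Definition Lambda (alpha : algC) (y : algC) : Prop :=
  inZpoly alpha y /\ exists p : {poly int}, y = alpha^-1 * intpoly_eval p alpha^-1.

(* The digit of x : the (unique, for x in Lambda) d in D = {0,..,N-1}
   with (x - d)/alpha in Lambda; chosen by classical choice. *)
Definition digit (alpha : algC) (N : nat) (x : algC) : nat :=
  epsilon (inhabits 0%N)
    (fun d : nat => (d < N)%N /\ Lambda alpha ((x - d%:R) / alpha)).

Definition Tmap (alpha : algC) (N : nat) (x : algC) : algC :=
  (x - (digit alpha N x)%:R) / alpha.

Definition finiteness_property (alpha : algC) (N : nat) : Prop :=
  forall x, Lambda alpha x -> exists n : nat, iter n (Tmap alpha N) x = 0.

(* a word d_{k-1} ... d_0 is stored as the tuple w with tnth w j = d_j *)
Definition in_L (alpha : algC) (N k : nat) (w : k.-tuple 'I_N) : Prop :=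
  forall l : nat, (l < k)%N ->
    Lambda alpha (\sum_(j < k | (l <= j)%N) (tnth w j : nat)%:R * alpha ^+ (j - l)).

Definition L_set (alpha : algC) (N k : nat) : {set k.-tuple 'I_N} :=
  [set w | `[< @in_L alpha N k w >] ].

From Stdlib Require Import ClassicalEpsilon.
From mathcomp Require Import all_boot all_order all_algebra all_field.
From mathcomp Require Import boolp.
From mathcomp Require Import ring zify.
Set Implicit Arguments. Unset Strict Implicit. Unset Printing Implicit Defensive.
Import Order.TTheory GRing.Theory Num.Theory.
Local Open Scope ring_scope.

(* A word [d_k ... d_0] of [L^(k+1)] is determined by its tail [d_k ... d_1],
   which lies in [L^k], together with [d_0].  If two words share their tail, the
   difference of their values is the integer [d_0 - d_0'], and it lies in
   [alpha^-1 Z[alpha^-1]].  As [alpha^-1] is a non-real root of the primitive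
   quadratic [a2 + a1 X + a0 X^2], this polynomial divides [X q - (d_0 - d_0')]
   in [Z[X]] by Gauss's lemma, so [a2] divides [d_0 - d_0'].  Hence [d_0] is
   determined by [d_0 %/ a2], which takes at most [ceil(|D| / a2)] values. *)

Section IntpolyEval.

Variable x : algC.

Lemma intpoly_evalD (p q : {poly int}) :
  intpoly_eval (p + q) x = intpoly_eval p x + intpoly_eval q x.
Proof. by rewrite /intpoly_eval rmorphD /= hornerD. Qed.

Lemma intpoly_evalB (p q : {poly int}) :
  intpoly_eval (p - q) x = intpoly_eval p x - intpoly_eval q x.
Proof. by rewrite /intpoly_eval rmorphB /= hornerD hornerN. Qed.

Lemma intpoly_evalM (p q : {poly int}) :
  intpoly_eval (p * q) x = intpoly_eval p x * intpoly_eval q x.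
Proof. by rewrite /intpoly_eval rmorphM /= hornerM. Qed.

Lemma intpoly_evalC (c : int) : intpoly_eval c%:P x = c%:~R.
Proof. by rewrite /intpoly_eval map_polyC hornerC. Qed.

Lemma intpoly_evalX : intpoly_eval 'X x = x.
Proof. by rewrite /intpoly_eval map_polyX hornerX. Qed.

Lemma intpoly_eval_wide (n : nat) (p : {poly int}) : (size p <= n)%N ->
  intpoly_eval p x = \sum_(i < n) (p`_i)%:~R * x ^+ i.
Proof.
move=> le_p_n; rewrite /intpoly_eval (@horner_coef_wide _ n).
  by apply: eq_bigr => i _; rewrite coef_map.
exact: leq_trans (size_poly _ _) le_p_n.
Qed.

End IntpolyEval.

Lemma nonreal_root_linear_intpoly (r : {poly int}) (b : algC) :
  b \notin Num.real -> (size r <= 2)%N -> intpoly_eval r b = 0 -> r = 0.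
Proof.
move=> b_nreal le_r_2; rewrite (intpoly_eval_wide b le_r_2).
rewrite !big_ord_recr big_ord0 /= add0r expr0 expr1 mulr1.
have r_eq0 : r`_0 = 0 -> r`_1 = 0 -> r = 0.
  move=> r0 r1; apply/polyP => -[|[|i]]; rewrite coef0 //.
  by rewrite nth_default //; apply: leq_trans le_r_2 _.
have [r1_0|r1_neq0] := eqVneq r`_1 0.
  by rewrite r1_0 mul0r addr0 => /eqP; rewrite intr_eq0 => /eqP /r_eq0; apply.
move=> /eqP; rewrite addr_eq0 mulrC => /eqP rb.
have b_rat : b = - (r`_0)%:~R / (r`_1)%:~R by rewrite rb opprK mulfK ?intr_eq0.
by case/negP: b_nreal; rewrite b_rat rpredM ?rpredN ?rpredV ?Rreal_int ?intr_int.
Qed.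

Lemma dvdp_nonreal_common_root (g f : {poly int}) (b : algC) :
  b \notin Num.real -> g != 0 -> (size g <= 3)%N ->
  intpoly_eval g b = 0 -> intpoly_eval f b = 0 -> g %| f.
Proof.
move=> b_nreal g_neq0 le_g_3 gb0 fb0; rewrite /dvdp; apply/eqP.
apply: (nonreal_root_linear_intpoly b_nreal).
  by rewrite -ltnS; apply: leq_trans (ltn_modpN0 f g_neq0) le_g_3.
have := congr1 (intpoly_eval^~ b) (Pdiv.Idomain.divp_eq f g).
by rewrite -mul_polyC !intpoly_evalM intpoly_evalD intpoly_evalM fb0 gb0 !mulr0 add0r.
Qed.

(* On [{poly int}], [g %| f] means divisibility in [Q[X]]; for primitive [g],
   Gauss's lemma ([dvdpP_int]) makes it divisibility in [Z[X]]. *)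
Lemma dvdp_coef0_dvdz (g f : {poly int}) :
  (zcontents g %| 1)%Z -> g %| f -> (g`_0 %| f`_0)%Z.
Proof.
move=> /dvdzP [u u_c] /dvdpP_int [r ->].
have -> : zprimitive g = u *: g by rewrite {2}(zpolyEprim g) scalerA -u_c scale1r.
by rewrite coef0M coefZ mulrAC dvdz_mull // dvdz_mulr.
Qed.

Lemma Lambda_subr_inv_Zpoly (alpha x y : algC) :
  Lambda alpha x -> Lambda alpha y ->
  exists p : {poly int}, x - y = alpha^-1 * intpoly_eval p alpha^-1.
Proof.
by move=> [_ [p ->]] [_ [q ->]]; exists (p - q); rewrite intpoly_evalB mulrBr.
Qed.

Lemma eq_divn_dvdz (n d1 d2 : nat) :
  (d1 %/ n = d2 %/ n)%N -> (n%:Z %| d1%:Z - d2%:Z)%Z -> d1 = d2.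
Proof.
move=> eq_div; rewrite -eqz_mod_dvd !modz_nat => /eqP [eq_mod].
by rewrite (divn_eq d1 n) (divn_eq d2 n) eq_div eq_mod.
Qed.

Lemma ltn_divn_ceil (d N n : nat) :
  (d < N)%N -> (0 < n)%N -> (d %/ n < (N + n - 1) %/ n)%N.
Proof.
move=> lt_d_N n_gt0; have -> : (N + n - 1 = (N - 1) + n)%N by lia.
by rewrite divnDr // divnn n_gt0 addn1 ltnS leq_div2r //; lia.
Qed.

Section Words.

Variables (alpha : algC) (N : nat).

Definition word_value (k : nat) (w : k.-tuple 'I_N) : algC :=
  \sum_(j < k) (tnth w j : nat)%:R * alpha ^+ j.

Lemma tnth_behead_lift (k : nat) (w : k.+1.-tuple 'I_N) (j : 'I_k) :
  tnth (behead_tuple w) j = tnth w (lift ord0 j).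
Proof. by rewrite !(tnth_nth (thead w)) /= nth_behead /bump leq0n add1n. Qed.

Lemma word_value_cons (k : nat) (w : k.+1.-tuple 'I_N) :
  word_value w = (thead w : nat)%:R + alpha * word_value (behead_tuple w).
Proof.
rewrite /word_value big_ord_recl expr0 mulr1 mulr_sumr; congr (_ + _).
by apply: eq_bigr => j _; rewrite tnth_behead_lift exprS mulrCA.
Qed.

Lemma in_L_word_value (k : nat) (w : k.+1.-tuple 'I_N) :
  in_L alpha w -> Lambda alpha (word_value w).
Proof.
by move=> /(_ 0%N isT); congr Lambda; apply: eq_bigr => j _; rewrite subn0.
Qed.

Lemma in_L_behead (k : nat) (w : k.+1.-tuple 'I_N) :
  in_L alpha w -> in_L alpha (behead_tuple w).
Proof.
move=> w_in l lt_l_k; have := w_in l.+1 lt_l_k.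
rewrite big_mkcond big_ord_recl /= add0r [in X in X -> _]big_mkcond /=.
congr Lambda; rewrite [RHS]big_mkcond; apply: eq_bigr => j _.
by rewrite tnth_behead_lift /bump leq0n add1n ltnS subSS.
Qed.

End Words.

Section Quadratic.

Variables (alpha : algC) (a0 a1 a2 : int).
Hypothesis alpha_nreal : alpha \notin Num.real.
Hypothesis coprime_coefs : gcdz (gcdz a0 a1) a2 = 1.
Hypothesis a2_neq0 : a2 != 0.
Hypothesis alpha_root : a2%:~R * alpha ^+ 2 + a1%:~R * alpha + a0%:~R = 0.

Lemma dvdz_int_inv_Zpoly (z : int) (p : {poly int}) :
  z%:~R = alpha^-1 * intpoly_eval p alpha^-1 -> (a2 %| z)%Z.
Proof.
move=> z_eq; set b := alpha^-1 in z_eq.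
have alpha_neq0 : alpha != 0 by apply: contraNneq alpha_nreal => ->; rewrite rpred0.
have b_nreal : b \notin Num.real by rewrite rpredV.
pose g := Poly [:: a2; a1; a0].
have g0 : g`_0 = a2 by rewrite coef_Poly.
have g_neq0 : g != 0 by apply: contra_neq a2_neq0 => g_eq0; rewrite -g0 g_eq0 coef0.
have g_root : intpoly_eval g b = 0.
  rewrite (intpoly_eval_wide b (size_Poly _)) !big_ord_recr big_ord0 !coef_Poly /=.
  rewrite add0r expr0 expr1 mulr1.
  have -> : a2%:~R + a1%:~R * b + a0%:~R * b ^+ 2 =
      (a2%:~R * alpha ^+ 2 + a1%:~R * alpha + a0%:~R) / alpha ^+ 2 by rewrite /b; field.
  by rewrite alpha_root mul0r.
pose f := 'X * p - z%:P.
have f_root : intpoly_eval f b = 0.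
  by rewrite intpoly_evalB intpoly_evalM intpoly_evalX intpoly_evalC z_eq subrr.
have g_dvd_f : g %| f.
  exact: (dvdp_nonreal_common_root b_nreal g_neq0 (size_Poly _) g_root f_root).
have g_primitive : (zcontents g %| 1)%Z.
  suff : (zcontents g %| gcdz (gcdz a0 a1) a2)%Z by rewrite coprime_coefs.
  have /polyOverP g_coef : g \is a polyOver (dvdz (zcontents g)).
    by rewrite -dvdz_contents dvdzz.
  move: (g_coef 0%N) (g_coef 1%N) (g_coef 2%N).
  by rewrite !coef_Poly !dvdz_gcd => -> -> ->.
have := dvdp_coef0_dvdz g_primitive g_dvd_f.
by rewrite g0 coefB coefXM coefC sub0r rpredN.
Qed.

Lemma in_L_inj_behead_divn (N k : nat) (w1 w2 : k.+1.-tuple 'I_N) :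
  in_L alpha w1 -> in_L alpha w2 -> behead w1 = behead w2 ->
  (thead w1 %/ `|a2| = thead w2 %/ `|a2|)%N -> w1 = w2.
Proof.
move=> /in_L_word_value w1_val /in_L_word_value w2_val eq_tail eq_div.
have [p diff] := Lambda_subr_inv_Zpoly w1_val w2_val.
have eq_tail_tuple : behead_tuple w1 = behead_tuple w2 by apply: val_inj.
rewrite !word_value_cons eq_tail_tuple opprD addrACA subrr addr0 in diff.
have a2_dvd : (a2 %| (thead w1 : nat)%:Z - (thead w2 : nat)%:Z)%Z.
  by apply: (dvdz_int_inv_Zpoly (p := p)); rewrite -diff rmorphB.
have eq_head : thead w1 = thead w2.
  by apply: val_inj; apply: eq_divn_dvdz eq_div _; rewrite dvdzE -dvdzE.
rewrite (tuple_eta w1) (tuple_eta w2); apply: val_inj => /=.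
by rewrite eq_head eq_tail.
Qed.

Lemma card_L_set_S (N k : nat) :
  (#|L_set alpha N k.+1| <= #|L_set alpha N k| * ((N + `|a2| - 1) %/ `|a2|))%N.
Proof.
set c := ((N + `|a2| - 1) %/ `|a2|)%N.
have a2_gt0 : (0 < `|a2|)%N by rewrite absz_gt0.
pose f (w : k.+1.-tuple 'I_N) :=
  (behead_tuple w, Ordinal (ltn_divn_ceil (ltn_ord (thead w)) a2_gt0) : 'I_c).
have f_inj : {in L_set alpha N k.+1 &, injective f}.
  move=> w1 w2; rewrite !inE => /asboolP w1_in /asboolP w2_in.
  rewrite /f => -[eq_tail eq_div].
  exact: in_L_inj_behead_divn.
have f_sub : f @: L_set alpha N k.+1 \subset setX (L_set alpha N k) [set: 'I_c].
  apply/subsetP => _ /imsetP [w + ->]; rewrite !inE andbT => /asboolP w_in.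
  by apply/asboolP; apply: in_L_behead.
rewrite -(card_in_imset f_inj); apply: leq_trans (subset_leq_card f_sub) _.
by rewrite cardsX cardsT card_ord.
Qed.

End Quadratic.

Theorem mainTheorem7 (alpha : algC) (a0 a1 a2 : int) :
  (exists a b : rat, alpha = ratr a + ratr b * 'i) ->
  alpha \notin Num.real ->
  1 < `|alpha| ->
  gcdz (gcdz a0 a1) a2 = 1 ->
  0 < a2 ->
  a2%:~R * alpha ^+ 2 + a1%:~R * alpha + a0%:~R = 0 ->
  finiteness_property alpha `|a0|%N ->
  forall k : nat,
    (#|L_set alpha `|a0|%N k| <= ((`|a0|%N + `|a2|%N - 1) %/ `|a2|%N) ^ k)%N.
Proof.
move=> _ alpha_nreal _ coprime_coefs a2_gt0 alpha_root _.
have card_S := card_L_set_S alpha_nreal coprime_coefs (lt0r_neq0 a2_gt0) alpha_root.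
elim=> [|k IHk].
  by apply: leq_trans (max_card _) _; rewrite card_tuple.
by rewrite expnS mulnC; apply: leq_trans (card_S _ k) _; rewrite leq_mul2r IHk orbT.
Qed.
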